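(* Consider any economy $\mathcal{E}$ (as in the context) such that either (1) in every state, all firms have the same ranking of workers (firms have possibly state-specific assortative preferences), or (2) $\mathcal{E}$ satisfies the SPC*. Then, considering Bayesian Nash equilibria in which firms report truthfully, $\mathcal{E}$ has a unique BNE outcome, namely the one that yields in each state $\theta$ the unique stable matching (for the true preferences) of $\mathcal{M}(\theta)$.
   Context: Matching market: $\mathcal{M}=(F,W,U)$ with finite firms $F=\{f_i\}_{i\in[m]}$, finite workers $W=\{w_j\}_{j\in[n]}$, utilities $u^f_{ij}$ of firm $f_i$ from worker $w_j$ and $u^w_{ij}$ of worker $w_j$ from firm $f_i$; unmatched utility is $0$; all preferences strict; all pairs mutually acceptable (all match utilities $>0$). An economy is $\mathcal{E}=(F,W,\{U(\theta)\}_{\theta\in\Theta},\Theta,\Psi)$ with finite $\Theta$, full-support prior $\Psi$, market $\mathcal{M}(\theta)=(F,W,U(\theta))$ in state $\theta$; workers' utilities are state-independent, firms' may depend on $\theta$. Standing assumption: each $\mathcal{M}(\theta)$ has a unique stable matching. Game: $\theta$ drawn by $\Psi$; firms observe $\theta$; each worker knows only his own preferences; all simultaneously submit rank-ordered lists of acceptable partners; firm-proposing Deferred Acceptance is run on the reports. Firms report truthfully; a worker's strategy is one rank-ordered list; a BNE is a profile where each worker's list maximizes his expected utility under $\Psi$. The outcome of a BNE is the matching produced in each state. Sub-market of $(F,W,U)$: $(F',W',U')$ with $F'\subseteq F$, $W'\subseteq W$, $U'$ the restriction of $U$. $(f,w)$ is a top-top match of a sub-market if $w$ is $f$'s favorite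 worker in it and $f$ is $w$'s favorite firm in it. A market satisfies the Sequential Preference Condition (SPC) if there are orderings $f_1,\dots,f_m$ of the firms and $w_1,\dots,w_n$ of the workers such that for each $i\le\min(m,n)$, $(f_i,w_i)$ is a top-top match of the sub-market induced by $\{f_j,w_j\}_{j\ge i}$; $(f_i,w_i)$ and its agents are said to have order $i$. An economy satisfies the SPC if each $\mathcal{M}(\theta)$ does, with possibly state-specific orderings $f_{1|\theta},\dots,f_{m|\theta}$ and $w_{1|\theta},\dots,w_{n|\theta}$. An economy satisfies the SPC* if it satisfies the SPC and for every state $\theta$, every $i\le\min(m,n)$ and every firm $f$: if $w_{i|\theta}$ strictly prefers $f$ to $f_{i|\theta}$, then for every state $\theta'$ there is $i'<i$ (possibly depending on $\theta'$) with $f=f_{i'|\theta'}$. *)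

From mathcomp Require Import all_boot all_order all_algebra.
Set Implicit Arguments. Unset Strict Implicit. Unset Printing Implicit Defensive.
Import Order.TTheory GRing.Theory Num.Theory.
Local Open Scope ring_scope.

Section Market.
Variables (R : realFieldType) (F W : finType).

(* A matching: each worker is matched to at most one firm (None = unmatched);
   it is a matching when no firm is matched to two workers. *)
Definition matching := {ffun W -> option F}.

Definition is_matching (mu : matching) : Prop :=
  forall w1 w2 f, mu w1 = Some f -> mu w2 = Some f -> w1 = w2.

(* Utilities of a market: uf f w (firm f from worker w), uw f w (worker w from firm f). *)
Variables (uf uw : F -> W -> R).

Definition worker_util (mu : matching) (w : W) : R :=
  if mu w is Some f then uw f w else 0.

Definition firm_util (mu : matching) (f : F) : R :=
  if [pick w | mu w == Some f] is Some w then uf f w else 0.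

Definition stable (mu : matching) : Prop :=
  [/\ is_matching mu,
      (forall w f, mu w = Some f -> 0 <= uw f w /\ 0 <= uf f w) &
      (forall f w, ~ (worker_util mu w < uw f w /\ firm_util mu f < uf f w))].

Definition top_top (fs : seq F) (ws : seq W) (f : F) (w : W) : Prop :=
  (forall w', w' \in ws -> uf f w' <= uf f w) /\
  (forall f', f' \in fs -> uw f' w <= uw f w).

(* fo, wo are orderings (enumerations without repetition) of all firms and all
   workers witnessing the Sequential Preference Condition (0-based indices). *)
Definition SPC_orderings (fo : seq F) (wo : seq W) : Prop :=
  [/\ perm_eq fo (enum F), perm_eq wo (enum W) &
      forall i f w, (i < minn #|F| #|W|)%N ->
        onth fo i = Some f -> onth wo i = Some w ->
        top_top (drop i fo) (drop i wo) f w].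

Definition SPC : Prop := exists fo wo, SPC_orderings fo wo.

End Market.

Section DA.
Variables (F W : finType).
Variables (P : F -> seq W) (Q : W -> seq F).
(* P f: firm f's reported list (most preferred first, only acceptable workers);
   Q w: worker w's reported list. *)

(* r f = number of rejections firm f has received so far; f currently
   proposes to the (r f)-th entry of its list, if any. *)
Definition da_target (r : {ffun F -> nat}) (f : F) : option W := onth (P f) (r f).

Definition da_held (r : {ffun F -> nat}) (w : W) : option F :=
  [pick f | (da_target r f == Some w) && (f \in Q w) &
     [forall g, ((da_target r g == Some w) && (g \in Q w)) ==>
                (index f (Q w) <= index g (Q w))%N]].

Definition da_step (r : {ffun F -> nat}) : {ffun F -> nat} :=
  [ffun f => if da_target r f is Some w then
               (if da_held r w == Some f then r f else (r f).+1)
             else r f].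

(* With lists of length <= #|W|, at most #|F| * #|W| rejections can happen,
   so the procedure has terminated after that many rounds. *)
Definition DA : {ffun W -> option F} :=
  let r := iter (#|F| * #|W|).+1 da_step [ffun _ => 0%N] in
  [ffun w => da_held r w].

End DA.

Section Economy.
Variables (R : realFieldType) (F W Th : finType).
Variables (uf : Th -> F -> W -> R) (uw : F -> W -> R) (Psi : Th -> R).

Definition economy_ok : Prop :=
  [/\ (forall th, 0 < Psi th), \sum_(th : Th) Psi th = 1,
      (forall th f w, 0 < uf th f w) /\ (forall f w, 0 < uw f w),
      (forall th f, injective (uf th f)) &
      (forall w, injective (uw ^~ w))].

Definition unique_stable : Prop :=
  forall th, exists! mu : matching F W, stable (uf th) uw mu.

Definition firm_list (th : Th) (f : F) : seq W :=
  sort (fun w1 w2 => uf th f w2 <= uf th f w1) (enum W).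

Definition profile := W -> seq F.

Definition outcome (s : profile) (th : Th) : matching F W :=
  DA (firm_list th) s.

Definition exp_util (s : profile) (w : W) : R :=
  \sum_(th : Th) Psi th * worker_util uw (outcome s th) w.

Definition deviate (s : profile) (w : W) (l : seq F) : profile :=
  fun w' => if w' == w then l else s w'.

Definition BNE (s : profile) : Prop :=
  (forall w, uniq (s w)) /\
  (forall w (l : seq F), uniq l -> exp_util (deviate s w l) w <= exp_util s w).

Definition common_firm_ranking : Prop :=
  forall th f g w1 w2, (uf th f w1 < uf th f w2) <-> (uf th g w1 < uf th g w2).

Definition SPC_star : Prop :=
  exists (fo : Th -> seq F) (wo : Th -> seq W),
    (forall th, SPC_orderings (uf th) uw (fo th) (wo th)) /\
    (forall th i fi wi f, (i < minn #|F| #|W|)%N ->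
       onth (fo th) i = Some fi -> onth (wo th) i = Some wi ->
       uw fi wi < uw f wi ->
       forall th', exists2 i', (i' < i)%N & onth (fo th') i' = Some f).

End Economy.

(* Deferred acceptance is the least fixpoint of a monotone rejection operator
   on rejection counts, which makes runs on different reports comparable.  Its
   outcome under truthful reports is stable, so it suffices to show that
   truthful reporting is an equilibrium and that every equilibrium has the
   truthful outcome.
   With a common firm ranking, DA is a serial dictatorship along that ranking:
   truthful reporting is weakly dominant, and the first worker in the ranking
   whose equilibrium outcome differed from the truthful one would gain by
   reporting truthfully.
   Under SPC*, truthful reports match the SPC pairs (f_i, w_i) in order and no
   unilateral deviation helps.  In an equilibrium, by induction on i over all
   states at once, w_i gets f_i: otherwise moving f_i just behind the firms w_i
   likes at least as much helps w_i weakly in every state and strictly in one,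
   because SPC* places every firm w_i prefers to f_i in an earlier pair, whose
   match the induction hypothesis fixes. *)

From mathcomp Require Import all_boot all_order all_algebra zify.
Import Order.TTheory GRing.Theory Num.Theory.
Set Implicit Arguments. Unset Strict Implicit. Unset Printing Implicit Defensive.
Local Open Scope ring_scope.

Lemma option_inhabited_eq (T : Type) (o1 o2 : option T) : (T -> o1 = o2) -> o1 = o2.
Proof. by case: o1 => [x /(_ x)//|]; case: o2 => // y /(_ y). Qed.

Lemma onth_lt (T : Type) (s : seq T) x0 i : (i < size s)%N -> onth s i = Some (nth x0 s i).
Proof. by move=> lt; rewrite onthE (nth_map x0). Qed.

Lemma onth_index (T : eqType) (s : seq T) x : x \in s -> onth s (index x s) = Some x.
Proof. by move=> xs; rewrite (onth_lt x) ?index_mem // nth_index. Qed.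

Lemma index_inj_in (T : eqType) (s : seq T) x y :
  x \in s -> y \in s -> index x s = index y s -> x = y.
Proof. by move=> xs ys e; rewrite -(nth_index x xs) e nth_index. Qed.

Lemma index_notin_drop (T : eqType) (s : seq T) j x :
  x \in s -> x \notin drop j s -> (index x s < j)%N.
Proof.
move=> xs; rewrite -(in_take j xs); move: xs.
by rewrite -{1}(cat_take_drop j s) mem_cat => /orP[|->].
Qed.

Lemma index_filter_leq (T : eqType) (a : pred T) (s : seq T) x y : a x -> a y ->
  (index x s <= index y s)%N -> (index x (filter a s) <= index y (filter a s))%N.
Proof.
move=> ax ay; elim: s => [|z s IH] //=.
have [->|zx] := eqVneq z x; first by rewrite ax /= eqxx.
have [->|zy] := eqVneq z y; first by rewrite ltn0.
by rewrite ltnS; case: (a z) => /=; rewrite ?(negbTE zx) ?(negbTE zy) ?ltnS.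
Qed.

Lemma onth_find_filter (T : eqType) (a q : pred T) (s : seq T) :
  {in s, forall x, a x -> q x} ->
  onth s (find a s) = onth (filter q s) (find a (filter q s)).
Proof.
elim: s => [|x s IH] //= aq.
have {}IH : onth s (find a s) = onth (filter q s) (find a (filter q s)).
  by apply: IH => y ys; apply: aq; rewrite in_cons ys orbT.
case ax: (a x); first by rewrite aq ?mem_head /= ?ax.
by case: (q x) => /=; rewrite ?ax.
Qed.

Section SortByKey.
Variables (R : realDomainType) (T : eqType) (k : T -> R) (s : seq T).
Hypothesis k_inj : injective k.

Lemma index_sort_key x y : x \in s -> y \in s ->
  (index x (sort (fun a b => (k b <= k a)%R) s)
     < index y (sort (fun a b => (k b <= k a)%R) s))%N = (k y < k x).
Proof.
set t := sort _ s => xs ys.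
have tr : transitive (fun a b => k b <= k a) by move=> a b c h1 h2; exact: le_trans h2 h1.
have so : sorted (fun a b => k b <= k a) t by apply: sort_sorted => a b; exact: le_total.
have mem z : z \in s -> z \in t by rewrite mem_sort.
have ord := sorted_ltn_index tr so.
apply/idP/idP => [lt|lt].
  rewrite lt_neqAle ord ?mem // andbT; apply: contraTneq lt => /k_inj ->.
  by rewrite ltnn.
case: ltngtP => // [gt|eq].
  by move: lt; rewrite ltNge ord ?mem.
by move: lt; rewrite (index_inj_in (mem _ xs) (mem _ ys) eq) ltxx.
Qed.

End SortByKey.

Section Promote.
Variables (T : eqType) (X : pred T) (g : T) (s : seq T).
Hypothesis Xg : X g.

Definition promote := [seq x <- s | X x && (x != g)] ++ g :: [seq x <- s | ~~ X x].

Lemma uniq_promote : uniq s -> uniq promote.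
Proof.
move=> us; rewrite cat_uniq /= !filter_uniq // !mem_filter Xg eqxx /= !andbT.
by apply/hasPn => x; rewrite !mem_filter => /andP[/negbTE-> _].
Qed.

Lemma mem_promote x : X x -> (x \in promote) = (x == g) || (x \in s).
Proof.
by move=> Xx; rewrite mem_cat in_cons !mem_filter Xx /= orbF orbC; case: (x =P g).
Qed.

Lemma index_promote_leq x : x \in promote ->
  (index x promote <= size [seq x <- s | X x && (x != g)])%N = X x.
Proof.
rewrite index_cat mem_cat; case: ifP => [xA _|_ /= xgC].
  by have := xA; rewrite mem_filter ltnW ?index_mem // => /andP[/andP[->]].
rewrite -[leqRHS]addn0 leq_add2l leqn0 /=.
case: (g =P x) xgC => [<-|gx]; first by rewrite Xg.
by rewrite in_cons mem_filter => /orP[/eqP/esym/gx|/andP[/negbTE->]].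
Qed.

Lemma onth_find_promote (a : pred T) : {in promote, forall x, X x -> ~~ a x} ->
  onth promote (find a promote) = onth s (find a s).
Proof.
move=> noX; rewrite find_cat.
have -> : has a [seq x <- s | X x && (x != g)] = false.
  apply/negbTE/hasPn => x xA; apply: noX; first by rewrite mem_cat xA.
  by move: xA; rewrite mem_filter => /andP[/andP[]].
rewrite onth_cat ltnNge leq_addr /= addKn /= (negbTE (noX g _ Xg)) ?mem_promote ?eqxx //=.
rewrite [RHS](@onth_find_filter _ _ (predC X)) // => x xs ax; apply/negP => Xx.
by move: (noX x); rewrite mem_promote // xs orbT ax => /(_ isT Xx).
Qed.

End Promote.

Section DeferredAcceptance.
Variables (F W : finType) (P : F -> seq W).
Hypothesis P_perm : forall f, perm_eq (P f) (enum W).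

Lemma mem_P f w : w \in P f.
Proof. by rewrite (perm_mem (P_perm f)) mem_enum. Qed.

Lemma uniq_P f : uniq (P f).
Proof. by rewrite (perm_uniq (P_perm f)) enum_uniq. Qed.

Lemma size_P f : size (P f) = #|W|.
Proof. by rewrite (perm_size (P_perm f)) -cardE. Qed.

Lemma index_P_lt f w : (index w (P f) < #|W|)%N.
Proof. by rewrite -(size_P f) index_mem mem_P. Qed.

Lemma index_P_inj f : injective (index ^~ (P f)).
Proof. by move=> w1 w2; apply: index_inj_in; apply: mem_P. Qed.

Implicit Types (Q : W -> seq F) (r : {ffun F -> nat}).

Definition proposed r f w := (index w (P f) <= r f)%N.

Definition top_proposer Q r w := onth (Q w) (find (proposed r ^~ w) (Q w)).

Lemma da_targetE r f w : da_target P r f = Some w <-> r f = index w (P f).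
Proof.
rewrite /da_target; split => [tw|->]; last by rewrite onth_index // mem_P.
have ltr : (r f < size (P f))%N by rewrite -onthTE tw.
have <- : nth w (P f) (r f) = w by rewrite -odflt_onth tw.
by rewrite index_uniq // uniq_P.
Qed.

Lemma da_target_None r f : da_target P r f = None <-> (#|W| <= r f)%N.
Proof.
by rewrite /da_target -(size_P f); split => [h|/onth_default //]; rewrite -onthNE h.
Qed.

Lemma da_target_proposed r f w : da_target P r f = Some w -> proposed r f w.
Proof. by move/da_targetE; rewrite /proposed => ->. Qed.

Lemma top_proposerP Q r w f : top_proposer Q r w = Some f ->
  [/\ f \in Q w, proposed r f w &
      forall g, g \in Q w -> proposed r g w -> (index f (Q w) <= index g (Q w))%N].
Proof.
rewrite /top_proposer; set i := find _ _ => tf.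
have ltr : (i < size (Q w))%N by rewrite -onthTE tf.
have <- : nth f (Q w) i = f by rewrite -odflt_onth tf.
have hs : has (proposed r ^~ w) (Q w) by rewrite has_find.
split; [exact: mem_nth | exact: (nth_find f hs) |].
move=> g gQ pg; apply: (leq_trans (index_nth f ltr)).
rewrite leqNgt; apply/negP => /(before_find g).
by rewrite nth_index // pg.
Qed.

Lemma top_proposer_None Q r w g :
  top_proposer Q r w = None -> g \in Q w -> ~~ proposed r g w.
Proof.
rewrite /top_proposer => tN gQ; apply/negP => pg.
have : has (proposed r ^~ w) (Q w) by apply/hasP; exists g.
by rewrite has_find -onthTE tN.
Qed.

Lemma top_proposer_exists Q r w g : g \in Q w -> proposed r g w ->
  exists2 f, top_proposer Q r w = Some f & (index f (Q w) <= index g (Q w))%N.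
Proof.
move=> gQ pg; case tf: (top_proposer Q r w) => [f|].
  by exists f => //; have [_ _ ->] := top_proposerP tf.
by move: (top_proposer_None tf gQ); rewrite pg.
Qed.

Lemma top_proposer_eq Q r w f : f \in Q w -> proposed r f w ->
  (forall g, g \in Q w -> proposed r g w -> (index f (Q w) <= index g (Q w))%N) ->
  top_proposer Q r w = Some f.
Proof.
move=> fQ pf fmin; have [f' tf' _] := top_proposer_exists fQ pf.
have [f'Q pf' f'min] := top_proposerP tf'.
by rewrite tf' (@index_inj_in _ (Q w) f' f) //; apply/eqP; rewrite eqn_leq fmin ?f'min.
Qed.

Lemma top_proposer_antimono Q (r1 r2 : {ffun F -> nat}) w f :
  (forall g, r1 g <= r2 g)%N ->
  top_proposer Q r2 w = Some f -> proposed r1 f w -> top_proposer Q r1 w = Some f.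
Proof.
move=> le12 tf p1f; have [fQ _ fmin] := top_proposerP tf.
by apply: top_proposer_eq => // g gQ p1g; apply: fmin; last exact: leq_trans p1g (le12 g).
Qed.

(* Unlike [da_step], [reject] is monotone in [r]; along the run of DA the two
   agree, so DA computes the least fixpoint of [reject]. *)
Definition reject Q r : {ffun F -> nat} :=
  [ffun f => if da_target P r f is Some w then
               (if top_proposer Q r w == Some f then r f else (r f).+1)
             else r f].

Definition holders_propose Q r :=
  forall w f, top_proposer Q r w = Some f -> da_target P r f = Some w.

Lemma da_held_top Q r w : holders_propose Q r -> da_held P Q r w = top_proposer Q r w.
Proof.
move=> hold; rewrite /da_held.
case: pickP => [f /andP[/andP[/eqP tf fQ] /forallP fmin] | none].
  case tg: (top_proposer Q r w) => [g|]; last first.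
    by move: (top_proposer_None tg fQ); rewrite da_target_proposed.
  have [gQ pg gmin] := top_proposerP tg.
  apply/esym/congr1/(index_inj_in gQ fQ)/eqP; rewrite eqn_leq gmin ?da_target_proposed //.
  by move: (fmin g); rewrite (hold _ _ tg) eqxx gQ.
case tg: (top_proposer Q r w) => [g|] //; have [gQ _ gmin] := top_proposerP tg.
move: (none g); rewrite (hold _ _ tg) eqxx gQ /= => /negP[].
apply/forallP => h; apply/implyP => /andP[/eqP th hQ].
by apply: gmin => //; exact: da_target_proposed th.
Qed.

Lemma reject_ge Q r f : (r f <= reject Q r f)%N.
Proof. by rewrite ffunE; case: da_target => // w; case: eqP. Qed.

Lemma reject_leS Q r f : (reject Q r f <= (r f).+1)%N.
Proof. by rewrite ffunE; case: da_target => // w; case: eqP. Qed.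

Lemma reject_mono Q (r1 r2 : {ffun F -> nat}) :
  (forall f, r1 f <= r2 f)%N -> forall f, (reject Q r1 f <= reject Q r2 f)%N.
Proof.
move=> le12 f; case: (ltngtP (r1 f) (r2 f)) => [lt|gt|eq].
- exact: leq_trans (reject_leS _ _ _) (leq_trans lt (reject_ge _ _ _)).
- by move: (le12 f); rewrite leqNgt gt.
rewrite !ffunE /da_target eq; case tw: (onth (P f) (r2 f)) => [w|] //.
case: (top_proposer Q r2 w =P Some f) => [t2|_]; last by case: ifP.
rewrite (top_proposer_antimono le12 t2) ?eqxx //.
by apply: da_target_proposed; rewrite /da_target eq.
Qed.

Lemma holders_propose0 Q : holders_propose Q [ffun _ => 0%N].
Proof.
move=> w f /top_proposerP[_ + _]; rewrite /proposed ffunE leqn0 => /eqP e.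
by apply/da_targetE; rewrite ffunE.
Qed.

Lemma holders_propose_reject Q r : holders_propose Q r -> holders_propose Q (reject Q r).
Proof.
move=> hold w f tf; have [fQ pf _] := top_proposerP tf; apply/da_targetE.
case: (leqP (index w (P f)) (r f)) => [old|new].
  have t0 : top_proposer Q r w = Some f by apply: top_proposer_antimono (reject_ge Q r) tf old.
  by rewrite ffunE (hold _ _ t0) t0 eqxx; apply/da_targetE/hold.
by apply/eqP; rewrite eqn_leq (leq_trans (reject_leS _ _ _) new); exact: pf.
Qed.

Definition da_fix Q := iter (#|F| * #|W|).+1 (reject Q) [ffun _ => 0%N].

Lemma iter_da_step Q t :
  let r := iter t (reject Q) [ffun _ => 0%N] in
  iter t (da_step P Q) [ffun _ => 0%N] = r /\ holders_propose Q r.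
Proof.
elim: t => [|t [IH hold]] /=; first by split => //; apply: holders_propose0.
split; last exact: holders_propose_reject.
by rewrite IH; apply/ffunP => f; rewrite !ffunE; case: da_target => // w; rewrite da_held_top.
Qed.

Lemma DA_top_proposer Q w : DA P Q w = top_proposer Q (da_fix Q) w.
Proof. by have [e hold] := iter_da_step Q (#|F| * #|W|).+1; rewrite ffunE e da_held_top. Qed.

Lemma iter_reject_le Q t f : (iter t (reject Q) [ffun _ => 0%N] f <= #|W|)%N.
Proof.
elim: t f => [|t IH] f /=; first by rewrite ffunE.
rewrite ffunE; case tw: da_target => [w|] //; case: eqP => _ //.
by move/da_targetE: tw => ->; apply: index_P_lt.
Qed.

Lemma sum_reject_gt Q r : reject Q r != r -> (\sum_f r f < \sum_f reject Q r f)%N.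
Proof.
move=> ne; have [f0 ltf0] : exists f, (r f < reject Q r f)%N.
  apply/existsP; apply: contraR ne; rewrite negb_exists => /forallP lef.
  by apply/eqP/ffunP => f; apply/eqP; rewrite eqn_leq reject_ge andbT leqNgt lef.
rewrite (bigD1 f0) //= [X in (_ < X)%N](bigD1 f0) //= -addSn leq_add //.
by apply: leq_sum => f _; apply: reject_ge.
Qed.

Lemma reject_da_fix Q : reject Q (da_fix Q) = da_fix Q.
Proof.
pose r t := iter t (reject Q) [ffun _ => 0%N].
have fixed_or_sum t : reject Q (r t) = r t \/ (t <= \sum_f r t f)%N.
  elim: t => [|t [fx|le]]; [by right | by left; rewrite /= fx fx |].
  have [fx|ne] := eqVneq (reject Q (r t)) (r t); first by left; rewrite /= fx fx.
  by right; apply: leq_ltn_trans le (sum_reject_gt ne).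
case: (fixed_or_sum (#|F| * #|W|).+1) => // big.
have : (\sum_f r (#|F| * #|W|).+1 f <= \sum_(f : F) #|W|)%N.
  by apply: leq_sum => f _; apply: iter_reject_le.
by rewrite sum_nat_const => /(leq_trans big); rewrite ltnn.
Qed.

Lemma da_fix_least Q r : (forall f, reject Q r f <= r f)%N -> forall f, (da_fix Q f <= r f)%N.
Proof.
move=> post; rewrite /da_fix; elim: (#|F| * #|W|).+1 => [|t IH] f /=; first by rewrite ffunE.
exact: leq_trans (reject_mono Q IH f) (post f).
Qed.

Lemma top_proposer_da_fix Q f w :
  da_target P (da_fix Q) f = Some w -> top_proposer Q (da_fix Q) w = Some f.
Proof.
move=> tw; have := congr1 (fun r : {ffun F -> nat} => r f) (reject_da_fix Q).
by rewrite /= ffunE tw; case: eqP => // _ /esym/n_Sn.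
Qed.

Lemma DA_SomeE Q w f : DA P Q w = Some f <-> da_fix Q f = index w (P f).
Proof.
rewrite DA_top_proposer -da_targetE; split; last exact: top_proposer_da_fix.
exact: (iter_da_step Q _).2.
Qed.

Lemma DA_inj Q w1 w2 f : DA P Q w1 = Some f -> DA P Q w2 = Some f -> w1 = w2.
Proof. by move=> /DA_SomeE e1 /DA_SomeE e2; apply: (@index_P_inj f); rewrite -e1 -e2. Qed.

Lemma DA_mem Q w f : DA P Q w = Some f -> f \in Q w.
Proof. by rewrite DA_top_proposer => /top_proposerP[]. Qed.

Lemma DA_proposed Q w f : f \in Q w -> proposed (da_fix Q) f w ->
  exists2 y, DA P Q w = Some y & (index y (Q w) <= index f (Q w))%N.
Proof. by rewrite DA_top_proposer; apply: top_proposer_exists. Qed.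

Lemma proposed_da_fix Q w f :
  (forall x, DA P Q x = Some f -> (index w (P f) < index x (P f))%N) ->
  proposed (da_fix Q) f w.
Proof.
move=> better; rewrite /proposed; case tx: (da_target P (da_fix Q) f) => [x|].
  have /better/ltnW : DA P Q x = Some f by rewrite DA_top_proposer (top_proposer_da_fix tx).
  by move/da_targetE: tx => ->.
by move/da_target_None: tx; apply: leq_trans (ltnW (index_P_lt _ _)).
Qed.

Lemma da_fix_le Q Q' :
  (forall w, top_proposer Q' (da_fix Q) w = top_proposer Q (da_fix Q) w) ->
  forall f, (da_fix Q' f <= da_fix Q f)%N.
Proof.
move=> same; apply: da_fix_least => f.
suff -> : reject Q' (da_fix Q) = reject Q (da_fix Q) by rewrite reject_da_fix.
by apply/ffunP => g; rewrite !ffunE; case: da_target => // w; rewrite same.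
Qed.

(* Before reaching [wo j], [fo j] could only have been held by an earlier worker,
   who is matched to an earlier firm. *)
Lemma proposed_of_prefix Q (fo : nat -> F) (wo : nat -> W) j :
  (forall p, (p < j)%N -> fo p <> fo j) ->
  (forall w, (index w (P (fo j)) < index (wo j) (P (fo j)))%N ->
     exists2 p, (p < j)%N & w = wo p) ->
  (forall p, (p < j)%N -> DA P Q (wo p) = Some (fo p)) ->
  proposed (da_fix Q) (fo j) (wo j).
Proof.
move=> fresh before prefix; rewrite /proposed leqNgt; apply/negP => early.
set t := da_fix Q (fo j) in early.
have tP : (t < size (P (fo j)))%N by rewrite size_P (ltn_trans early) ?index_P_lt.
set w := nth (wo j) (P (fo j)) t.
have iw : index w (P (fo j)) = t by rewrite index_uniq // uniq_P.
have [p pj ew] : exists2 p, (p < j)%N & w = wo p by apply: before; rewrite iw.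
have : DA P Q w = Some (fo j) by apply/DA_SomeE; rewrite iw.
by rewrite ew prefix // => -[/fresh]; apply.
Qed.

Lemma DA_sequential Q k (fo : nat -> F) (wo : nat -> W) :
  (forall p j, (p < j)%N -> (j < k)%N -> fo p <> fo j) ->
  (forall p j, (p < j)%N -> (j < k)%N -> wo p <> wo j) ->
  (forall j w, (j < k)%N -> (index w (P (fo j)) < index (wo j) (P (fo j)))%N ->
     exists2 p, (p < j)%N & w = wo p) ->
  (forall j, (j < k)%N -> (da_fix Q (fo j) <= index (wo j) (P (fo j)))%N \/
     (fo j \in Q (wo j) /\ forall y, y \in Q (wo j) ->
        (index y (Q (wo j)) < index (fo j) (Q (wo j)))%N ->
        exists2 p, (p < j)%N & y = fo p)) ->
  forall j, (j < k)%N -> DA P Q (wo j) = Some (fo j).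
Proof.
move=> ffresh wfresh before stay j; elim/ltn_ind: j => j IH jk.
have prefix p : (p < j)%N -> DA P Q (wo p) = Some (fo p).
  by move=> pj; apply: IH => //; apply: ltn_trans jk.
have pj := proposed_of_prefix (fun p pj => ffresh p j pj jk) (before j ^~ jk) prefix.
case: (stay j jk) => [le|[fQ above]].
  by apply/DA_SomeE/eqP; rewrite eqn_leq le; exact: pj.
have [y wy] := DA_proposed fQ pj; rewrite wy.
case: ltngtP => // [lt _|eq _]; last by rewrite (index_inj_in (DA_mem wy) fQ eq).
have [p pj' ey] := above y (DA_mem wy) lt.
by case: (wfresh p j pj' jk); apply: DA_inj (prefix p pj') _; rewrite -ey.
Qed.

Section CommonList.
Variable pi : seq W.
Hypothesis P_common : forall f, P f = pi.

Lemma DA_common_available Q w f : f \in Q w ->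
  (forall w', (index w' pi < index w pi)%N -> DA P Q w' <> Some f) ->
  exists2 y, DA P Q w = Some y & (index y (Q w) <= index f (Q w))%N.
Proof.
move=> fQ taken; have [wf|nwf] := eqVneq (DA P Q w) (Some f); first by exists f.
apply: DA_proposed fQ _; apply: proposed_da_fix => x xf.
case: ltngtP => // [|/index_P_inj ew]; last by rewrite ew xf eqxx in nwf.
by rewrite P_common => /taken.
Qed.

Lemma DA_common_local Q Q' w : Q w = Q' w ->
  (forall w', (index w' pi < index w pi)%N -> DA P Q w' = DA P Q' w') ->
  DA P Q w = DA P Q' w.
Proof.
have improve Q1 Q2 y : Q1 w = Q2 w ->
    (forall w', (index w' pi < index w pi)%N -> DA P Q1 w' = DA P Q2 w') ->
    DA P Q1 w = Some y ->
    exists2 y', DA P Q2 w = Some y' & (index y' (Q1 w) <= index y (Q1 w))%N.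
  move=> e12 before wy; rewrite e12; apply: DA_common_available.
    by rewrite -e12; apply: DA_mem wy.
  move=> w' lt; rewrite -before // => /(DA_inj wy) ew.
  by rewrite ew ltnn in lt.
move=> eQ before.
have before' w' : (index w' pi < index w pi)%N -> DA P Q' w' = DA P Q w'.
  by move=> lt; rewrite before.
case wy: (DA P Q w) => [y|]; last first.
  case w'y: (DA P Q' w) => [y'|] //.
  by have [y''] := improve _ _ _ (esym eQ) before' w'y; rewrite wy.
have [y' w'y le1] := improve _ _ _ eQ before wy.
have [y'' wy'' le2] := improve _ _ _ (esym eQ) before' w'y.
have ey : y'' = y by move: wy''; rewrite wy => -[].
rewrite ey -eQ in le2.
rewrite w'y; congr Some; apply: (index_inj_in (DA_mem wy)).
  by rewrite eQ (DA_mem w'y).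
by apply/eqP; rewrite eqn_leq le2.
Qed.

Lemma DA_common_prefix Q Q' k : (forall w, (index w pi < k)%N -> Q w = Q' w) ->
  forall w, (index w pi < k)%N -> DA P Q w = DA P Q' w.
Proof.
move=> eQ; suff agree n w : index w pi = n -> (n < k)%N -> DA P Q w = DA P Q' w.
  by move=> w; apply: agree.
elim/ltn_ind: n w => n IH w iw lt.
apply: DA_common_local; first by apply: eQ; rewrite iw.
by move=> w' lt'; apply: IH (erefl _) _; [rewrite -iw | rewrite (ltn_trans lt') ?iw].
Qed.

End CommonList.

Section Promotion.
Variables (Q Q' : W -> seq F) (w : W) (g : F) (X : pred F).
Hypotheses (Xg : X g) (Q'w : Q' w = promote X g (Q w))
  (Q'_other : forall w', w' != w -> Q' w' = Q w').

Lemma top_proposer_other r w' : w' != w -> top_proposer Q' r w' = top_proposer Q r w'.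
Proof. by move=> ne; rewrite /top_proposer Q'_other. Qed.

Lemma top_proposer_promote r : (forall x, x \in Q' w -> X x -> ~~ proposed r x w) ->
  top_proposer Q' r w = top_proposer Q r w.
Proof. by rewrite /top_proposer Q'w => noX; apply: onth_find_promote. Qed.

Lemma unproposed_promote r : (forall z, top_proposer Q' r w = Some z -> ~~ X z) ->
  forall x, x \in Q' w -> X x -> ~~ proposed r x w.
Proof.
move=> notX x xQ' Xx; apply/negP => px.
have [y ty _] := top_proposer_exists xQ' px.
have [yQ' _ ymin] := top_proposerP ty.
have : (index y (Q' w) <= size [seq x <- Q w | X x && (x != g)])%N.
  by apply: leq_trans (ymin x xQ' px) _; rewrite Q'w index_promote_leq // -Q'w.
by rewrite Q'w index_promote_leq -?Q'w // (negbTE (notX y ty)).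
Qed.

Lemma DA_promote_not_X : (forall z, DA P Q' w = Some z -> ~~ X z) ->
  DA P Q' w = DA P Q w /\ ~~ proposed (da_fix Q) g w.
Proof.
rewrite !DA_top_proposer => notX.
have same' := top_proposer_promote (unproposed_promote notX).
have le1 f : (da_fix Q f <= da_fix Q' f)%N.
  apply: da_fix_le => w'; have [->|ne] := eqVneq w' w; first by rewrite same'.
  by rewrite top_proposer_other.
have unproposed x : x \in Q' w -> X x -> ~~ proposed (da_fix Q) x w.
  move=> xQ' Xx; apply: contra (unproposed_promote notX xQ' Xx).
  by move=> px; apply: leq_trans px (le1 x).
have le2 f : (da_fix Q' f <= da_fix Q f)%N.
  apply: da_fix_le => w'; have [->|ne] := eqVneq w' w.
    exact: top_proposer_promote.
  exact: top_proposer_other.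
have -> : da_fix Q' = da_fix Q by apply/ffunP => f; apply/eqP; rewrite eqn_leq le1 le2.
split; first exact: top_proposer_promote.
by apply: unproposed Xg; rewrite Q'w mem_promote ?eqxx.
Qed.

Lemma da_fix_promote_le h : DA P Q w = Some h -> X h -> h != g ->
  forall f, (da_fix Q' f <= da_fix Q f)%N.
Proof.
rewrite DA_top_proposer => th Xh hg; have [hQ ph hmin] := top_proposerP th.
have hA : h \in [seq x <- Q w | X x && (x != g)] by rewrite mem_filter Xh hg.
apply: da_fix_le => w'; have [->|ne] := eqVneq w' w; last exact: top_proposer_other.
rewrite th; apply: top_proposer_eq => //; first by rewrite Q'w mem_cat hA.
move=> y yQ' py; rewrite Q'w !index_cat hA; case: ifP => [yA|_].
  move: yA; rewrite mem_filter => /andP[yA yQ].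
  by apply: index_filter_leq => //; [rewrite Xh | apply: hmin].
by rewrite (leq_trans _ (leq_addr _ _)) // ltnW // index_mem.
Qed.

End Promotion.

End DeferredAcceptance.

Section Economy.
Variables (R : realFieldType) (F W Th : finType).
Variables (uf : Th -> F -> W -> R) (uw : F -> W -> R) (Psi : Th -> R).
Hypotheses (Psi_gt0 : forall th, 0 < Psi th) (uf_gt0 : forall th f w, 0 < uf th f w)
  (uw_gt0 : forall f w, 0 < uw f w) (uf_inj : forall th f, injective (uf th f))
  (uw_inj : forall w, injective (uw ^~ w)).

Definition truthful : profile F W :=
  fun w => sort (fun f1 f2 => uw f2 w <= uw f1 w) (enum F).

Lemma perm_firm_list th f : perm_eq (firm_list uf th f) (enum W).
Proof. by rewrite /firm_list perm_sort. Qed.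

Lemma index_firm_list th f w1 w2 :
  (index w1 (firm_list uf th f) < index w2 (firm_list uf th f))%N = (uf th f w2 < uf th f w1).
Proof. by apply: index_sort_key; rewrite ?mem_enum. Qed.

Lemma mem_truthful w f : f \in truthful w.
Proof. by rewrite mem_sort mem_enum. Qed.

Lemma uniq_truthful w : uniq (truthful w).
Proof. by rewrite sort_uniq enum_uniq. Qed.

Lemma index_truthful w f1 f2 :
  (index f1 (truthful w) < index f2 (truthful w))%N = (uw f2 w < uw f1 w).
Proof. by apply: index_sort_key; rewrite ?mem_enum. Qed.

Lemma index_truthful_leq w f1 f2 :
  (index f1 (truthful w) <= index f2 (truthful w))%N = (uw f2 w <= uw f1 w).
Proof. by rewrite leqNgt index_truthful -leNgt. Qed.

Lemma deviate_other (s : profile F W) w l w' : w' != w -> deviate s w l w' = s w'.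
Proof. by rewrite /deviate => /negbTE->. Qed.

Lemma deviate_self (s : profile F W) w l : deviate s w l w = l.
Proof. by rewrite /deviate eqxx. Qed.

Lemma worker_util_ge0 (mu : matching F W) w : 0 <= worker_util uw mu w.
Proof. by rewrite /worker_util; case: (mu w) => // f; apply: ltW. Qed.

Lemma worker_util_inj (mu mu' : matching F W) w :
  worker_util uw mu w = worker_util uw mu' w -> mu w = mu' w.
Proof.
rewrite /worker_util; case: (mu w) => [f|]; case: (mu' w) => [f'|] //.
- by move/uw_inj->.
- by move=> e; move: (uw_gt0 f w); rewrite e ltxx.
- by move=> e; move: (uw_gt0 f' w); rewrite -e ltxx.
Qed.

Lemma ler_exp_util s s' w :
  (forall th, worker_util uw (outcome uf s th) w <= worker_util uw (outcome uf s' th) w) ->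
  exp_util uf uw Psi s w <= exp_util uf uw Psi s' w.
Proof. by move=> le; apply: ler_sum => th _; rewrite ler_pM2l. Qed.

Lemma BNE_undominated s w l th : BNE uf uw Psi s -> uniq l ->
  (forall th', worker_util uw (outcome uf s th') w
               <= worker_util uw (outcome uf (deviate s w l) th') w) ->
  worker_util uw (outcome uf (deviate s w l) th) w <= worker_util uw (outcome uf s th) w.
Proof.
move=> [_ noDev] ul le; rewrite leNgt; apply/negP => lt.
have := noDev w l ul; rewrite leNgt => /negP[].
rewrite /exp_util (bigD1 th) //= [X in _ < X](bigD1 th) //= ltr_leD ?ltr_pM2l //.
by apply: ler_sum => th' _; rewrite ler_pM2l.
Qed.

Lemma truthful_stable th : stable (uf th) uw (outcome uf truthful th).
Proof.
have P_perm := perm_firm_list th.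
split; [exact: DA_inj | by move=> w f _; rewrite !ltW |].
move=> f w [wu fu].
have fw : proposed (firm_list uf th) (da_fix (firm_list uf th) truthful) f w.
  apply: proposed_da_fix => // x xf; rewrite index_firm_list.
  move: fu; rewrite /firm_util; case: pickP => [x' /eqP x'f|/(_ x)]; last by rewrite xf eqxx.
  by rewrite (DA_inj P_perm x'f xf).
have [y wy] := DA_proposed P_perm (mem_truthful w f) fw.
by move: wu; rewrite /worker_util /outcome wy index_truthful_leq ltNge => /negP.
Qed.

Lemma stable_of_truthful_outcome s th :
  (forall w, outcome uf s th w = outcome uf truthful th w) ->
  stable (uf th) uw (outcome uf s th).
Proof.
move=> same; have -> : outcome uf s th = outcome uf truthful th by apply/ffunP.
exact: truthful_stable.
Qed.

Section CommonRanking.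
Hypothesis common : common_firm_ranking uf.

Lemma firm_list_common th f f0 : firm_list uf th f = firm_list uf th f0.
Proof.
pose ge g w1 w2 := uf th g w2 <= uf th g w1.
have same_ge : ge f =2 ge f0.
  by move=> w1 w2; rewrite /ge !leNgt; congr negb; apply/idP/idP => /(common th); apply.
apply: (@sorted_eq _ (ge f)).
- by move=> w1 w2 w3 h1 h2; apply: le_trans h2 h1.
- by move=> w1 w2 /andP[h1 h2]; apply: (uf_inj (th := th) (f := f)); apply/le_anti/andP.
- by apply: sort_sorted => w1 w2; apply: le_total.
- by rewrite (eq_sorted same_ge); apply: sort_sorted => w1 w2; apply: le_total.
- by rewrite (permPl (perm_firm_list th f)) perm_sym perm_firm_list.
Qed.

Lemma truthful_dominant_common (s s' : profile F W) w th :
  (forall w', w' != w -> s' w' = s w') -> s' w = truthful w ->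
  worker_util uw (outcome uf s th) w <= worker_util uw (outcome uf s' th) w.
Proof.
move=> s's s'w; rewrite /worker_util /outcome.
have P_perm := perm_firm_list th.
case wz: (DA _ s w) => [z|]; last by case: (DA _ s' w) => // f; apply: ltW.
have P_common f : firm_list uf th f = firm_list uf th z by apply: firm_list_common.
have taken w' : (index w' (firm_list uf th z) < index w (firm_list uf th z))%N ->
    DA (firm_list uf th) s' w' <> Some z.
  move=> lt; rewrite -(DA_common_prefix P_perm P_common (Q := s) _ lt).
    by move/(DA_inj P_perm wz) => ew; rewrite ew ltnn in lt.
  by move=> w'' lt''; rewrite s's //; apply: contraTneq lt'' => ->; rewrite ltnn.
have zs'w : z \in s' w by rewrite s'w mem_truthful.
have [y ->] := DA_common_available P_perm P_common zs'w taken.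
by rewrite s'w index_truthful_leq.
Qed.

Lemma truthful_BNE_common : BNE uf uw Psi truthful.
Proof.
split=> [|w l _]; first exact: uniq_truthful.
apply: ler_exp_util => th; apply: truthful_dominant_common => // w' w'w.
by rewrite deviate_other.
Qed.

Lemma BNE_outcome_common s : BNE uf uw Psi s ->
  forall th w, outcome uf s th w = outcome uf truthful th w.
Proof.
move=> bne th w; apply: option_inhabited_eq => f0; move: w.
have P_perm := perm_firm_list th; set pi := firm_list uf th f0.
have P_common f : firm_list uf th f = pi by apply: firm_list_common.
suff agree n w : index w pi = n -> outcome uf s th w = outcome uf truthful th w.
  by move=> w; apply: agree.
elim/ltn_ind: n w => n IH w iw; apply/eqP/negPn/negP => differ.
set s' := deviate s w (truthful w).
have s's w' : w' != w -> s' w' = s w' by apply: deviate_other.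
have before w' : (index w' pi < index w pi)%N ->
    outcome uf s' th w' = outcome uf truthful th w'.
  move=> lt; rewrite -(IH (index w' pi)) -?iw //.
  apply: (DA_common_prefix P_perm P_common (k := index w pi)) => // w'' lt''.
  by rewrite s's //; apply: contraTneq lt'' => ->; rewrite ltnn.
have dev_truthful : outcome uf s' th w = outcome uf truthful th w.
  by apply: (DA_common_local P_perm P_common); [apply: deviate_self | apply: before].
have := BNE_undominated th bne (uniq_truthful w)
  (fun th' => truthful_dominant_common th' s's (deviate_self s w _)).
rewrite le_eqVlt ltNge truthful_dominant_common ?deviate_self // orbF.
by move/eqP/worker_util_inj; rewrite dev_truthful => /esym; apply/eqP.
Qed.

End CommonRanking.

Local Notation m := (minn #|F| #|W|).

Section SPC.
Variables (th : Th) (fo : seq F) (wo : seq W) (f0 : F) (w0 : W).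
Hypothesis spc : SPC_orderings (uf th) uw fo wo.

Lemma size_spc_firms : size fo = #|F|.
Proof. by case: spc => /perm_size-> _ _; rewrite -cardE. Qed.

Lemma size_spc_workers : size wo = #|W|.
Proof. by case: spc => _ /perm_size-> _; rewrite -cardE. Qed.

Lemma uniq_spc_firms : uniq fo.
Proof. by case: spc => /perm_uniq-> _ _; apply: enum_uniq. Qed.

Lemma uniq_spc_workers : uniq wo.
Proof. by case: spc => _ /perm_uniq-> _; apply: enum_uniq. Qed.

Lemma mem_spc_firms f : f \in fo.
Proof. by case: spc => /perm_mem-> _ _; apply: mem_enum. Qed.

Lemma mem_spc_workers w : w \in wo.
Proof. by case: spc => _ /perm_mem-> _; apply: mem_enum. Qed.

Lemma spc_firms_lt j : (j < m)%N -> (j < size fo)%N.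
Proof. by rewrite size_spc_firms => /leq_trans; apply; apply: geq_minl. Qed.

Lemma spc_workers_lt j : (j < m)%N -> (j < size wo)%N.
Proof. by rewrite size_spc_workers => /leq_trans; apply; apply: geq_minr. Qed.

Lemma index_spc_worker j : (j < m)%N -> index (nth w0 wo j) wo = j.
Proof. by move=> jm; rewrite index_uniq ?uniq_spc_workers ?spc_workers_lt. Qed.

Lemma spc_top_top j : (j < m)%N ->
  top_top (uf th) uw (drop j fo) (drop j wo) (nth f0 fo j) (nth w0 wo j).
Proof.
by move=> jm; case: spc => _ _; apply; rewrite // -onth_lt ?spc_firms_lt ?spc_workers_lt.
Qed.

Lemma spc_firm_better j w : (j < m)%N ->
  uf th (nth f0 fo j) (nth w0 wo j) < uf th (nth f0 fo j) w -> (index w wo < j)%N.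
Proof.
move=> jm lt; apply: index_notin_drop (mem_spc_workers w) _; apply/negP => wd.
by have [/(_ w wd) + _] := spc_top_top jm; rewrite leNgt lt.
Qed.

Lemma spc_worker_better j f : (j < m)%N ->
  uw (nth f0 fo j) (nth w0 wo j) < uw f (nth w0 wo j) -> (index f fo < j)%N.
Proof.
move=> jm lt; apply: index_notin_drop (mem_spc_firms f) _; apply/negP => fd.
by have [_ /(_ f fd)] := spc_top_top jm; rewrite leNgt lt.
Qed.

Lemma spc_firm_inj p j : (p < m)%N -> (j < m)%N -> nth f0 fo p = nth f0 fo j -> p = j.
Proof.
by move=> pm jm /eqP; rewrite nth_uniq ?uniq_spc_firms ?spc_firms_lt // => /eqP.
Qed.

Lemma spc_worker_inj p j : (p < m)%N -> (j < m)%N -> nth w0 wo p = nth w0 wo j -> p = j.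
Proof.
by move=> pm jm /eqP; rewrite nth_uniq ?uniq_spc_workers ?spc_workers_lt // => /eqP.
Qed.

Lemma spc_late_card w : (m <= index w wo)%N -> m = #|F|.
Proof.
have : (index w wo < #|W|)%N by rewrite -size_spc_workers index_mem mem_spc_workers.
by rewrite /minn; case: (ltnP #|F| #|W|) => //; lia.
Qed.

Lemma DA_spc Q K : (K <= m)%N ->
  (forall j, (j < K)%N ->
     (da_fix (firm_list uf th) Q (nth f0 fo j)
        <= index (nth w0 wo j) (firm_list uf th (nth f0 fo j)))%N
     \/ Q (nth w0 wo j) = truthful (nth w0 wo j)) ->
  forall j, (j < K)%N -> outcome uf Q th (nth w0 wo j) = Some (nth f0 fo j).
Proof.
move=> Km stay; have ltm j : (j < K)%N -> (j < m)%N by move/leq_trans; apply.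
apply: (DA_sequential (perm_firm_list th)).
- move=> p j pj jK /(spc_firm_inj (ltm _ (ltn_trans pj jK)) (ltm _ jK)) e.
  by rewrite e ltnn in pj.
- move=> p j pj jK /(spc_worker_inj (ltm _ (ltn_trans pj jK)) (ltm _ jK)) e.
  by rewrite e ltnn in pj.
- move=> j w jK; rewrite index_firm_list => /(spc_firm_better (ltm _ jK)) lt.
  by exists (index w wo); [exact: lt | rewrite nth_index ?mem_spc_workers].
move=> j jK; case: (stay j jK) => [|->]; [by left | right].
split=> [|y _]; first exact: mem_truthful.
rewrite index_truthful => /(spc_worker_better (ltm _ jK)) lt.
by exists (index y fo); [exact: lt | rewrite nth_index ?mem_spc_firms].
Qed.

Lemma truthful_spc j : (j < m)%N -> outcome uf truthful th (nth w0 wo j) = Some (nth f0 fo j).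
Proof. by apply: (DA_spc (leqnn m)) => j' _; right. Qed.

Lemma outcome_spc Q :
  (forall j, (j < m)%N -> outcome uf Q th (nth w0 wo j) = Some (nth f0 fo j)) ->
  forall w, outcome uf Q th w =
    if (index w wo < m)%N then Some (nth f0 fo (index w wo)) else None.
Proof.
move=> matched w; case: ifPn => [lt|]; first by rewrite -matched // nth_index ?mem_spc_workers.
rewrite -leqNgt => late; case wz: (outcome uf Q th w) => [z|] //.
have zm : (index z fo < m)%N.
  by rewrite (spc_late_card late) -size_spc_firms index_mem mem_spc_firms.
have := matched _ zm; rewrite nth_index ?mem_spc_firms //.
move/(DA_inj (perm_firm_list th) wz) => ew.
by move: late; rewrite ew index_spc_worker // leqNgt zm.
Qed.

End SPC.

(* Against truthful reports, the workers ranked before [w] keep their SPC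
   partners whatever [w] reports, and [w] can get no firm it prefers to its own. *)
Lemma truthful_best_response_spc th fo wo (Q : profile F W) w :
  SPC_orderings (uf th) uw fo wo -> (forall w', w' != w -> Q w' = truthful w') ->
  worker_util uw (outcome uf Q th) w <= worker_util uw (outcome uf truthful th) w.
Proof.
move=> spc Qt; rewrite {1}/worker_util.
case wz: (outcome uf Q th w) => [z|]; last exact: worker_util_ge0.
set k := minn (index w wo) m.
have prefix j : (j < k)%N -> outcome uf Q th (nth w wo j) = Some (nth z fo j).
  apply: (DA_spc spc (geq_minr _ _)) => j' j'k; right; apply: Qt.
  have j'm : (j' < m)%N := leq_trans j'k (geq_minr _ _).
  by apply: contraTneq j'k => <-; rewrite (index_spc_worker w spc) // ltnNge geq_minl.
have zlate : (k <= index z fo)%N.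
  rewrite leqNgt; apply/negP => zk; have := prefix _ zk.
  rewrite nth_index ?(mem_spc_firms spc) // => /(DA_inj (perm_firm_list th) wz) ew.
  have zm : (index z fo < m)%N := leq_trans zk (geq_minr _ _).
  by move: zk; rewrite /k ew (index_spc_worker w spc) // ltnNge geq_minl.
case: (ltnP (index w wo) m) => [wm|mw].
  rewrite -(nth_index w (mem_spc_workers spc w)) /worker_util (truthful_spc z w spc) //.
  rewrite leNgt; apply/negP => /(spc_worker_better spc wm); rewrite ltnNge.
  by move: zlate; rewrite /k (minn_idPl (ltnW wm)) => ->.
have zF : (index z fo < #|F|)%N by rewrite -(size_spc_firms spc) index_mem (mem_spc_firms spc).
by move: zlate; rewrite /k (minn_idPr mw) (spc_late_card spc mw) leqNgt zF.
Qed.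

Lemma truthful_BNE_spc : (forall th, SPC (uf th) uw) -> BNE uf uw Psi truthful.
Proof.
move=> spc; split=> [|w l _]; first exact: uniq_truthful.
apply: ler_exp_util => th; have [fo [wo spc_th]] := spc th.
by apply: truthful_best_response_spc spc_th _ => w' w'w; rewrite deviate_other.
Qed.

Section SPCStar.
Variables (fo : Th -> seq F) (wo : Th -> seq W) (f0 : F) (w0 : W) (s : profile F W).
Hypotheses (spc : forall th, SPC_orderings (uf th) uw (fo th) (wo th))
  (star : forall th i fi wi f, (i < m)%N ->
     onth (fo th) i = Some fi -> onth (wo th) i = Some wi -> uw fi wi < uw f wi ->
     forall th', exists2 i', (i' < i)%N & onth (fo th') i' = Some f)
  (bne : BNE uf uw Psi s).

Section Step.
Variables (i : nat) (th : Th).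
Hypotheses (im : (i < m)%N) (prefix : forall th' j, (j < i)%N ->
  outcome uf s th' (nth w0 (wo th') j) = Some (nth f0 (fo th') j)).

Local Notation w := (nth w0 (wo th) i).
Local Notation g := (nth f0 (fo th) i).
Local Notation X := (fun x => uw g w <= uw x w).
Local Notation s' := (deviate s w (promote X g (s w))).

Let Xg : X g. Proof. exact: lexx. Qed.

Let s'_w : s' w = promote X g (s w). Proof. exact: deviate_self. Qed.

Let s'_other w' : w' != w -> s' w' = s w'. Proof. exact: deviate_other. Qed.

Let promote_unchanged th' : (forall z, outcome uf s' th' w = Some z -> ~~ X z) ->
  outcome uf s' th' w = outcome uf s th' w /\
  ~~ proposed (firm_list uf th') (da_fix (firm_list uf th') s) g w.
Proof. exact: (DA_promote_not_X (X := X) (perm_firm_list th') Xg s'_w s'_other). Qed.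

Lemma better_than_g_earlier th' x : uw g w < uw x w ->
  exists2 j, (j < i)%N & nth f0 (fo th') j = x.
Proof.
move=> lt; have [j ji fj] := star im (onth_lt f0 (spc_firms_lt (spc th) im))
  (onth_lt w0 (spc_workers_lt (spc th) im)) lt th'.
by exists j => //; rewrite -odflt_onth fj.
Qed.

Lemma outcome_not_better x : outcome uf s th w = Some x -> uw x w <= uw g w.
Proof.
move=> wx; rewrite leNgt; apply/negP => /(better_than_g_earlier th) [j ji fj].
have := prefix th ji; rewrite fj => /(DA_inj (perm_firm_list th) wx).
by move/esym/(spc_worker_inj (spc th) (ltn_trans ji im) im) => e; rewrite e ltnn in ji.
Qed.

Lemma promote_keeps_better th' h : outcome uf s th' w = Some h -> uw g w < uw h w ->
  outcome uf s' th' w = Some h.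
Proof.
move=> wh lt; have [j ji fj] := better_than_g_earlier th' lt.
have jm : (j < m)%N := ltn_trans ji im.
have wj : nth w0 (wo th') j = w.
  by apply: (DA_inj (perm_firm_list th')) wh; rewrite prefix // fj.
have hg : h != g by apply: contraTneq lt => ->; rewrite ltxx.
have le := da_fix_promote_le (X := X) (perm_firm_list th') s'_w s'_other wh (ltW lt) hg.
have : outcome uf s' th' (nth w0 (wo th') j) = Some (nth f0 (fo th') j).
  apply: (DA_spc (spc th') jm) (ltnSn j) => j' j'j; left; apply: (leq_trans (le _)).
  by have /(DA_SomeE (perm_firm_list th')) -> := prefix th' (leq_trans j'j ji).
by rewrite wj fj.
Qed.

Lemma promote_weakly_better th' :
  worker_util uw (outcome uf s th') w <= worker_util uw (outcome uf s' th') w.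
Proof.
rewrite /worker_util; case wh: (outcome uf s th' w) => [h|]; last first.
  by case: (outcome uf s' th' w) => // f; apply: ltW.
have [better|not_better] := ltP (uw g w) (uw h w).
  by rewrite (promote_keeps_better wh better).
case wz: (outcome uf s' th' w) => [z|]; first have [Xz|nXz] := boolP (X z).
- exact: le_trans not_better Xz.
- have [] := promote_unchanged (th' := th'); first by rewrite wz => _ [<-].
  by rewrite wz wh => -[->].
- have [] := promote_unchanged (th' := th'); first by rewrite wz.
  by rewrite wz wh.
Qed.

Lemma promote_strictly_better : outcome uf s th w != Some g ->
  worker_util uw (outcome uf s th) w < worker_util uw (outcome uf s' th) w.
Proof.
move=> not_g; have P_perm := perm_firm_list th.
have g_proposed : proposed (firm_list uf th) (da_fix (firm_list uf th) s) g w.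
  apply: (proposed_of_prefix P_perm (fo := nth f0 (fo th)) (wo := nth w0 (wo th))).
  - move=> p pi /(spc_firm_inj (spc th) (ltn_trans pi im) im) e.
    by rewrite e ltnn in pi.
  - move=> w'; rewrite index_firm_list => /(spc_firm_better (spc th) im) lt.
    by exists (index w' (wo th)); rewrite ?nth_index ?(mem_spc_workers (spc th)).
  - exact: prefix.
have [z wz Xz] : exists2 z, outcome uf s' th w = Some z & X z.
  case wz: (outcome uf s' th w) => [z|]; first have [Xz|nXz] := boolP (X z).
  - by exists z.
  - have [] := promote_unchanged (th' := th); first by rewrite wz => _ [<-].
    by rewrite g_proposed.
  - have [] := promote_unchanged (th' := th); first by rewrite wz.
    by rewrite g_proposed.
rewrite /worker_util wz; case wx: (outcome uf s th w) => [x|]; last exact: uw_gt0.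
apply: lt_le_trans Xz; rewrite lt_neqAle outcome_not_better // andbT.
by apply: contra not_g => /eqP/uw_inj <-; rewrite wx.
Qed.

Lemma BNE_spc_step : outcome uf s th w = Some g.
Proof.
apply/eqP/negPn/negP => /promote_strictly_better; apply/negP; rewrite -leNgt.
exact: BNE_undominated bne (uniq_promote Xg (bne.1 w)) promote_weakly_better.
Qed.

End Step.

Lemma BNE_outcome_spc th j : (j < m)%N ->
  outcome uf s th (nth w0 (wo th) j) = Some (nth f0 (fo th) j).
Proof.
elim/ltn_ind: j th => j IH th jm; apply: BNE_spc_step => // th' j' j'j.
exact: IH (ltn_trans j'j jm).
Qed.

End SPCStar.

Lemma BNE_stable_spc_star s : SPC_star uf uw -> BNE uf uw Psi s ->
  forall th, stable (uf th) uw (outcome uf s th).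
Proof.
move=> [fo [wo [spc star]]] bne th; apply: stable_of_truthful_outcome => w.
apply: option_inhabited_eq => f0.
rewrite (outcome_spc (spc th) (BNE_outcome_spc f0 w spc star bne th)).
by rewrite (outcome_spc (spc th) (truthful_spc f0 w (spc th))).
Qed.

End Economy.

Theorem proposition1 (R : realFieldType) (F W Th : finType)
    (uf : Th -> F -> W -> R) (uw : F -> W -> R) (Psi : Th -> R) :
  economy_ok uf uw Psi ->
  unique_stable uf uw ->
  common_firm_ranking uf \/ SPC_star uf uw ->
  (exists s : profile F W, BNE uf uw Psi s) /\
  (forall s : profile F W, BNE uf uw Psi s ->
     forall th : Th, stable (uf th) uw (outcome uf s th)).
Proof.
case=> Psi_gt0 _ [uf_gt0 uw_gt0] uf_inj uw_inj _ [common|star].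
  split; first by exists (truthful uw); apply: truthful_BNE_common.
  move=> s bne th; apply: stable_of_truthful_outcome => //.
  exact: BNE_outcome_common.
split; last by move=> s; apply: BNE_stable_spc_star.
exists (truthful uw); apply: truthful_BNE_spc => // th.
by case: star => fo [wo [spc _]]; exists (fo th), (wo th).
Qed.
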